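(* Let $K$ be a compact Hausdorff space and let $\mu\in Seq^{\alpha}(\mathrm{span}\,\Delta_K)$ for some ordinal $\alpha<\omega_1$. If $\varphi\in C(K)$ and $\nu\in M(K)$ is defined by $\nu(\Omega):=\int_\Omega \varphi\, d\mu$ for every Borel set $\Omega\subseteq K$, then $\nu\in Seq^{\alpha}(\mathrm{span}\,\Delta_K)$. Moreover, the same statement holds if $\mathrm{span}\,\Delta_K$ is replaced by $M^+(K)\cap \mathrm{span}\,\Delta_K$ and $\varphi\ge 0$.
   Context: $C(K)$ is the Banach space of continuous real-valued functions on $K$, and $M(K)=C(K)^*$ is the space of Radon signed measures on $K$, always equipped with the weak$^*$ topology. $M^+(K)$ denotes the non-negative Radon measures. For $t\in K$, $\delta_t$ is the Dirac measure at $t$, $\Delta_K=\{\delta_t:t\in K\}$, and $\mathrm{span}\,\Delta_K$ is its linear span in $M(K)$. For $A\subseteq M(K)$, define $Seq^0(A)=A$, $Seq^{\alpha+1}(A)$ = the set of all limits of weak$^*$-convergent sequences in $Seq^{\alpha}(A)$, and $Seq^\alpha(A)=\bigcup_{\beta<\alpha}Seq^\beta(A)$ for limit ordinals $\alpha$. *)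

From HB Require Import structures.
From mathcomp Require Import all_boot all_order all_algebra.
From mathcomp Require Import all_classical all_reals topology normedtype sequences.
Set Implicit Arguments. Unset Strict Implicit. Unset Printing Implicit Defensive.
Import Order.TTheory GRing.Theory Num.Theory numFieldNormedType.Exports.
Local Open Scope ring_scope.
Local Open Scope classical_set_scope.

(* M(K) = C(K)^* (the paper's own identification, via Riesz).  An element of
   M(K) is represented by a map  mu : (K -> R) -> R  whose restriction to the
   continuous functions is linear and bounded; only its values on C(K) matter. *)
Section Meas.
Variables (R : realType) (K : topologicalType).

Definition is_meas (mu : (K -> R) -> R) : Prop :=
  (forall (a b : R) (f g : K -> R), continuous f -> continuous g ->
     mu (fun x => a * f x + b * g x) = a * mu f + b * mu g) /\
  (exists M : R, forall f : K -> R, continuous f ->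
     (forall x, `|f x| <= 1) -> `|mu f| <= M).

Definition is_pos_meas (mu : (K -> R) -> R) : Prop :=
  is_meas mu /\
  (forall f : K -> R, continuous f -> (forall x, 0 <= f x) -> 0 <= mu f).

Definition in_span_dirac (mu : (K -> R) -> R) : Prop :=
  exists s : seq (R * K), forall f : K -> R, continuous f ->
    mu f = \sum_(p <- s) p.1 * f p.2.

Definition span_dirac : set ((K -> R) -> R) :=
  [set mu | is_meas mu /\ in_span_dirac mu].

Definition pos_span_dirac : set ((K -> R) -> R) :=
  [set mu | is_pos_meas mu /\ in_span_dirac mu].

Definition wstar_cvg (mus : nat -> (K -> R) -> R) (mu : (K -> R) -> R) : Prop :=
  forall f : K -> R, continuous f -> (fun n => mus n f) @ \oo --> mu f.

Definition seq_limits (A : set ((K -> R) -> R)) : set ((K -> R) -> R) :=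
  [set mu | is_meas mu /\
     exists mus : nat -> (K -> R) -> R, (forall n, A (mus n)) /\ wstar_cvg mus mu].

(* the measure  nu(Omega) = int_Omega phi dmu, i.e. f |-> int f phi dmu *)
Definition mul_meas (phi : K -> R) (mu : (K -> R) -> R) : (K -> R) -> R :=
  fun f => mu (fun x => phi x * f x).
End Meas.

(* Countable ordinals as Brouwer trees: BZ = 0, BS a = a+1, BL f = sup_n f n.
   Every ordinal < omega_1 is denoted by such a tree. *)
Inductive bord : Type :=
| BZ : bord
| BS : bord -> bord
| BL : (nat -> bord) -> bord.

(* Seq^alpha(A); at a limit, Seq^(sup_n f n) = union_n Seq^(f n), which equals
   union_{beta < alpha} Seq^beta by monotonicity of the hierarchy. *)
Fixpoint Seq_iter (R : realType) (K : topologicalType)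
  (A : set ((K -> R) -> R)) (a : bord) : set ((K -> R) -> R) :=
  match a with
  | BZ => A
  | BS b => seq_limits (Seq_iter A b)
  | BL f => [set mu | exists n, Seq_iter A (f n) mu]
  end.

From HB Require Import structures.
From mathcomp Require Import all_boot all_order all_algebra.
From mathcomp Require Import all_classical all_reals topology normedtype sequences.
From mathcomp Require Import ring.
Import Order.TTheory GRing.Theory Num.Theory numFieldNormedType.Exports.
Local Open Scope ring_scope.
Local Open Scope classical_set_scope.

(* Multiplication by a continuous phi acts on functionals by precomposition
   with f |-> phi * f, a map of C(K) into itself.  Hence it sends discrete
   measures to discrete measures (positive ones to positive ones if phi >= 0)
   and, being the adjoint of a map on C(K), it is weak*-sequentially
   continuous; so it preserves every level of the Seq^alpha hierarchy. *)

Section SeqIterStable.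
Variables (R : realType) (K : topologicalType).
Variables (A : set ((K -> R) -> R)) (T : ((K -> R) -> R) -> (K -> R) -> R).
Hypothesis T_A : forall mu, A mu -> A (T mu).
Hypothesis T_meas : forall mu, is_meas mu -> is_meas (T mu).
Hypothesis T_wstar_cvg : forall mus mu,
  wstar_cvg mus mu -> wstar_cvg (fun n => T (mus n)) (T mu).

Lemma Seq_iter_stable (a : bord) (mu : (K -> R) -> R) :
  Seq_iter A a mu -> Seq_iter A a (T mu).
Proof.
elim: a mu => [|b IH|g IH] mu /=; first exact: T_A.
- move=> [mu_meas [mus [A_mus mus_mu]]]; split; first exact: T_meas.
  by exists (fun n => T (mus n)); split; [move=> n; apply: IH|exact: T_wstar_cvg].
- by move=> [n Hn]; exists n; apply: IH.
Qed.

End SeqIterStable.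

Lemma continuous_mulfun (R : realType) (K : topologicalType) (f g : K -> R) :
  continuous f -> continuous g -> continuous (fun x => f x * g x).
Proof. by move=> cf cg x; apply: cvgM; [exact: cf|exact: cg]. Qed.

Section MulMeas.
Variables (R : realType) (K : topologicalType) (phi : K -> R).
Hypothesis cphi : continuous phi.

Let continuous_mul (f : K -> R) :
  continuous f -> continuous (fun x => phi x * f x).
Proof. exact: continuous_mulfun. Qed.

Lemma continuous_compact_bounded : compact [set: K] ->
  exists2 C : R, 0 < C & forall x, `|phi x| <= C.
Proof.
move=> cK; have cI : compact (phi @` [set: K]).
  by apply: continuous_compact => //; apply: continuous_subspaceT.
have [M [Mr HM]] := compact_bounded cI.
exists (`|M| + 1); first by rewrite ltr_wpDl.
move=> x; apply: (HM (`|M| + 1)); last by exists x.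
by rewrite (le_lt_trans (real_ler_norm Mr)) // ltrDl.
Qed.

Lemma mul_meas_is_meas (mu : (K -> R) -> R) : compact [set: K] ->
  is_meas mu -> is_meas (mul_meas phi mu).
Proof.
move=> cK [lin [M HM]]; split.
  move=> a b f g cf cg; rewrite /mul_meas -lin; try exact: continuous_mul.
  by congr mu; apply: funext => x; ring.
have [C C0 HC] := continuous_compact_bounded cK.
exists (C * M) => f cf f1.
pose g x := phi x * f x / C.
have cg : continuous g.
  by apply: continuous_mulfun; [exact: continuous_mul|exact: cst_continuous].
have -> : mul_meas phi mu f = C * mu g + 0 * mu g.
  rewrite -lin //; congr mu; apply: funext => x.
  by rewrite /g mul0r addr0 mulrCA divff ?mulr1 // gt_eqF.
rewrite mul0r addr0 normrM gtr0_norm // ler_pM2l //; apply: HM => // x.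
rewrite normrM normfV (gtr0_norm C0) ler_pdivrMr // mul1r normrM.
by rewrite -[C]mulr1 ler_pM // f1.
Qed.

Lemma mul_meas_pos (mu : (K -> R) -> R) : compact [set: K] ->
  (forall x, 0 <= phi x) -> is_pos_meas mu -> is_pos_meas (mul_meas phi mu).
Proof.
move=> cK phi_ge0 [mu_meas mu_pos]; split; first exact: mul_meas_is_meas.
by move=> f cf f_ge0; apply: mu_pos; [exact: continuous_mul|move=> x; apply: mulr_ge0].
Qed.

Lemma mul_meas_span_dirac (mu : (K -> R) -> R) :
  in_span_dirac mu -> in_span_dirac (mul_meas phi mu).
Proof.
move=> [s Hs]; exists [seq (p.1 * phi p.2, p.2) | p <- s] => f cf.
rewrite /mul_meas Hs; last exact: continuous_mul.
by rewrite big_map; apply: eq_bigr => p _ /=; rewrite mulrA.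
Qed.

Lemma wstar_cvg_mul_meas (mus : nat -> (K -> R) -> R) (mu : (K -> R) -> R) :
  wstar_cvg mus mu -> wstar_cvg (fun n => mul_meas phi (mus n)) (mul_meas phi mu).
Proof. by move=> mus_mu f cf; apply: mus_mu; exact: continuous_mul. Qed.

End MulMeas.

Theorem lemma2p1 (R : realType) (K : topologicalType)
  (hK : hausdorff_space K) (cK : compact [set: K]) :
  (forall (a : bord) (mu : (K -> R) -> R) (phi : K -> R),
     Seq_iter (@span_dirac R K) a mu -> continuous phi ->
     Seq_iter (@span_dirac R K) a (mul_meas phi mu)) /\
  (forall (a : bord) (mu : (K -> R) -> R) (phi : K -> R),
     Seq_iter (@pos_span_dirac R K) a mu -> continuous phi ->
     (forall x, 0 <= phi x) ->
     Seq_iter (@pos_span_dirac R K) a (mul_meas phi mu)).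
Proof.
split=> [a mu phi + cphi | a mu phi + cphi phi_ge0]; apply: Seq_iter_stable.
- by move=> nu [nu_meas nu_span]; split;
    [exact: mul_meas_is_meas|exact: mul_meas_span_dirac].
- by move=> nu; exact: mul_meas_is_meas.
- exact: wstar_cvg_mul_meas.
- by move=> nu [nu_pos nu_span]; split;
    [exact: mul_meas_pos|exact: mul_meas_span_dirac].
- by move=> nu; exact: mul_meas_is_meas.
- exact: wstar_cvg_mul_meas.
Qed.
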